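(* Let $q$ be a prime power, $t>1$ an integer, and $\Gamma_1,\ldots,\Gamma_t$ pairwise disjoint projective bundles of conics in $\mathrm{PG}(2,q)$. Let $A$ be the binary point-line incidence matrix of $\mathrm{PG}(2,q)$ and $B_i$ the binary point-conic incidence matrix of $\Gamma_i$ (rows indexed by the points in the same order), and let $H_{q,t}=(A\mid B_1\mid\cdots\mid B_t)$. Then the maximum column intersection of $H_{q,t}$ is at most $4$. Consequently, one round of the bit-flipping decoding algorithm with respect to $H_{q,t}$ corrects every error of Hamming weight at most $\lfloor\frac{q+1}{8}\rfloor$ in the code $C=\ker(H_{q,t})=\{c: cH_{q,t}^\top=0\}$; that is, for every $c\in C$ and $e$ with $\mathrm{wt}(e)\le\lfloor\frac{q+1}{8}\rfloor$, one round applied to $c+e$ outputs $c$.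
   Context: $\mathrm{PG}(2,q)$ is the projective plane whose points and lines are the 1- and 2-dimensional subspaces of $\mathbb{F}_q^3$. A (non-degenerate) conic is the set of points of $\mathrm{PG}(2,q)$ satisfying an irreducible homogeneous quadratic equation; it has $q+1$ points and meets every line in at most two points. A projective bundle of conics is a collection of $q^2+q+1$ conics any two of which meet in exactly one point; two bundles are disjoint if they share no conic. The maximum column intersection of a binary matrix is the maximum, over pairs of distinct columns, of the number of rows in which both columns have a $1$. $H_{q,t}$ has constant column weight $v=q+1$. One round of the bit-flipping algorithm on input $y$ for a binary matrix $H$ of constant column weight $v$: compute $s=Hy^\top$; for each column $j$ let $u_j$ be the number of rows $i$ with $H_{ij}=1$ and $s_i=1$; output $y$ with the bits in positions $\{j: u_j>v/2\}$ flipped. *)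

From HB Require Import structures.
From mathcomp Require Import all_boot all_order all_algebra all_field.
Set Implicit Arguments. Unset Strict Implicit. Unset Printing Implicit Defensive.
Import GRing.Theory.
Local Open Scope ring_scope.

(* ---------- The projective plane PG(2,q) over a finite field F, q = #|F| ----
   Subspaces of F^3 (row vectors) are represented canonically by square
   matrices M with <<M>>%MS = M (mxalgebra's canonical generator). *)

Definition Point (F : finFieldType) :=
  {M : 'M[F]_3 | (<<M>>%MS == M) && (\rank M == 1%N)}.
Definition Line (F : finFieldType) :=
  {M : 'M[F]_3 | (<<M>>%MS == M) && (\rank M == 2%N)}.

Definition incident (F : finFieldType) (p : Point F) (l : Line F) : bool :=
  (val p <= val l)%MS.

Definition line_pts (F : finFieldType) (l : Line F) : {set Point F} :=
  [set p | incident p l].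

Definition qeval (R : pzRingType) (a : 'M[R]_3) (x : 'rV[R]_3) : R :=
  \sum_(i < 3) \sum_(j < 3 | (i <= j)%N) a i j * x 0 i * x 0 j.

(* Q_a is absolutely irreducible: over no field extension L of F (given by a
   ring morphism f : F -> L) is Q_a a product of two linear forms
   (u.x)(w.x); written coefficientwise (polynomial equality). *)
Definition abs_irreducible (F : fieldType) (a : 'M[F]_3) : Prop :=
  forall (L : fieldType) (f : {rmorphism F -> L}) (u w : 'rV[L]_3),
    exists i j : 'I_3, ((i <= j)%N) &&
      (f (a i j) != (if i == j then u 0 i * w 0 i
                     else u 0 i * w 0 j + u 0 j * w 0 i)).

Definition zero_set (F : finFieldType) (a : 'M[F]_3) : {set Point F} :=
  [set p : Point F | [forall v : 'rV[F]_3, (v <= val p)%MS ==> (qeval a v == 0)]].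

Definition is_conic (F : finFieldType) (C : {set Point F}) : Prop :=
  exists a : 'M[F]_3, abs_irreducible a /\ C = zero_set a.

Definition projective_bundle (F : finFieldType) (G : {set {set Point F}}) : Prop :=
  [/\ forall C, C \in G -> is_conic C,
      #|G| = (#|F| ^ 2 + #|F| + 1)%N &
      forall C D, C \in G -> D \in G -> C != D -> #|C :&: D| = 1%N].

(* ---------- The matrix H_{q,t} = (A | B_1 | ... | B_t) ----------------------
   Columns are listed as point sets: first all lines, then the conics of
   Gamma_1, ..., Gamma_t. *)
Definition Hcols (F : finFieldType) (t : nat) (Gam : 'I_t -> {set {set Point F}})
  : seq {set Point F} :=
  [seq line_pts l | l <- enum {: Line F}] ++
  flatten [seq enum (Gam i) | i <- enum 'I_t].

Definition Hmx (F : finFieldType) (t : nat) (Gam : 'I_t -> {set {set Point F}})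
  : 'M['F_2]_(#|{: Point F}|, size (Hcols Gam)) :=
  \matrix_(i < #|{: Point F}|, j < size (Hcols Gam))
     ((enum_val i \in nth set0 (Hcols Gam) j) : nat)%:R.

Definition col_inter (m n : nat) (H : 'M['F_2]_(m, n)) (j k : 'I_n) : nat :=
  #|[set i : 'I_m | (H i j == 1) && (H i k == 1)]|.

Definition max_col_inter (m n : nat) (H : 'M['F_2]_(m, n)) : nat :=
  \max_(j < n) \max_(k < n | k != j) col_inter H j k.

Definition wt (n : nat) (y : 'rV['F_2]_n) : nat := #|[set j : 'I_n | y 0 j != 0]|.

Definition in_code (m n : nat) (H : 'M['F_2]_(m, n)) (c : 'rV['F_2]_n) : bool :=
  c *m H^T == 0.

Definition bitflip (m n : nat) (H : 'M['F_2]_(m, n)) (v : nat) (y : 'rV['F_2]_n)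
  : 'rV['F_2]_n :=
  let s := H *m y^T in
  let u := fun j : 'I_n => #|[set i : 'I_m | (H i j == 1) && (s i 0 == 1)]| in
  \row_j (y 0 j + (if (v < 2 * u j)%N then 1 else 0)).

(* Distinct lines share at most one point, a line meets an absolutely
   irreducible conic in at most two points (three collinear zeros would make the
   polar form vanish on two of them, and the form would then factor), and two
   distinct such conics share at most four points (through five common points,
   a suitable member of their pencil is isotropic on a plane or has collinear
   zeros).  The columns of H_{q,t} are pairwise distinct point sets, since the
   bundles are disjoint and no conic is a line, so any two of them meet in at
   most 4 rows.  Every column has at least q+1 ones: a conic of a bundle meets
   another one, and the lines through that point cut out q+1 points.
   For bit flipping, if columns have weight at least v and pairwise overlap at
   most l, an error e with 2 l wt(e) <= v leaves every erroneous column with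
   more than v/2 unsatisfied checks (at most l (wt(e) - 1) checks are shared
   with other errors) and every correct column with at most l wt(e) <= v/2. *)

From HB Require Import structures.
From mathcomp Require Import all_boot all_order all_algebra all_field.
From mathcomp Require Import ring zify.
Set Implicit Arguments. Unset Strict Implicit. Unset Printing Implicit Defensive.
Import GRing.Theory.
Local Open Scope ring_scope.

Definition i0 : 'I_3 := @Ordinal 3 0 isT.
Definition i1 : 'I_3 := @Ordinal 3 1 isT.
Definition i2 : 'I_3 := @Ordinal 3 2 isT.

Lemma ord3_cases (i : 'I_3) : [\/ i = i0, i = i1 | i = i2].
Proof.
by case: i => [[|[|[|//]]] Hi]; [apply: Or31 | apply: Or32 | apply: Or33];
  apply/val_inj.
Qed.

Lemma sum_ord3 (R : nmodType) (f : 'I_3 -> R) :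
  \sum_(i < 3) f i = f i0 + f i1 + f i2.
Proof.
rewrite !big_ord_recl big_ord0 addr0 addrA.
by congr (f _ + f _ + f _); apply/val_inj.
Qed.

Section QuadraticForm.
Variable R : comPzRingType.
Implicit Types (a b : 'M[R]_3) (x y u v w : 'rV[R]_3) (k s t mu : R).

Lemma qevalE a x : qeval a x =
  a i0 i0 * x 0 i0 * x 0 i0 + a i0 i1 * x 0 i0 * x 0 i1 + a i0 i2 * x 0 i0 * x 0 i2
  + a i1 i1 * x 0 i1 * x 0 i1 + a i1 i2 * x 0 i1 * x 0 i2 + a i2 i2 * x 0 i2 * x 0 i2.
Proof. by rewrite /qeval sum_ord3; do 3 rewrite big_mkcond sum_ord3 /=; ring. Qed.

Definition qpolar a x y := qeval a (x + y) - qeval a x - qeval a y.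

Definition row3 (c0 c1 c2 : R) : 'rV[R]_3 :=
  \row_(k < 3) (if k == i0 then c0 else if k == i1 then c1 else c2).

Lemma row3E c0 c1 c2 :
  ((row3 c0 c1 c2) 0 i0 = c0) * ((row3 c0 c1 c2) 0 i1 = c1) * ((row3 c0 c1 c2) 0 i2 = c2).
Proof. by rewrite !mxE. Qed.

Definition dot3 x u := x 0 i0 * u 0 i0 + x 0 i1 * u 0 i1 + x 0 i2 * u 0 i2.

Lemma dot3E x u : (x *m u^T) 0 0 = dot3 x u.
Proof. by rewrite mxE sum_ord3 !mxE. Qed.

Definition rows3 (b0 b1 b2 : 'rV[R]_3) : 'M[R]_3 :=
  \matrix_(i, j) (if i == i0 then b0 0 j else if i == i1 then b1 0 j else b2 0 j).

Lemma mul_rows3 (b0 b1 b2 : 'rV[R]_3) x :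
  x *m rows3 b0 b1 b2 = x 0 i0 *: b0 + x 0 i1 *: b1 + x 0 i2 *: b2.
Proof. by apply/rowP => j; rewrite !mxE sum_ord3 !mxE. Qed.

Lemma qevalZ a k x : qeval a (k *: x) = k ^+ 2 * qeval a x.
Proof. rewrite !qevalE !mxE; ring. Qed.

Lemma qeval_comb2 a s t x y :
  qeval a (s *: x + t *: y) =
  s ^+ 2 * qeval a x + s * t * qpolar a x y + t ^+ 2 * qeval a y.
Proof. rewrite /qpolar !qevalE !mxE; ring. Qed.

Lemma qeval_comb3 a (x0 x1 x2 : R) (b0 b1 b2 : 'rV[R]_3) :
  qeval a (x0 *: b0 + x1 *: b1 + x2 *: b2) =
  x0 ^+ 2 * qeval a b0 + x1 ^+ 2 * qeval a b1 + x2 ^+ 2 * qeval a b2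
  + x0 * x1 * qpolar a b0 b1 + x0 * x2 * qpolar a b0 b2 + x1 * x2 * qpolar a b1 b2.
Proof. rewrite /qpolar !qevalE !mxE; ring. Qed.

Lemma qeval_comb3_isotropic a (v1 v2 v3 : 'rV[R]_3) (x0 x1 x2 : R) :
  qeval a v1 = 0 -> qeval a v2 = 0 -> qeval a v3 = 0 -> qpolar a v1 v2 = 0 ->
  qeval a (x0 *: v1 + x1 *: v2 + x2 *: v3) =
  x2 * (x0 * qpolar a v1 v3 + x1 * qpolar a v2 v3).
Proof. by move=> Q1 Q2 Q3 B12; rewrite qeval_comb3 Q1 Q2 Q3 B12; ring. Qed.

Lemma qeval_eq0_coef a :
  (forall x, qeval a x = 0) -> forall i j : 'I_3, (i <= j)%N -> a i j = 0.
Proof.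
move=> a0; have e (c0 c1 c2 : R) := a0 (row3 c0 c1 c2).
have := e 1 0 0; have := e 0 1 0; have := e 0 0 1.
have := e 1 1 0; have := e 1 0 1; have := e 0 1 1.
rewrite !qevalE !row3E !(mul1r, mulr1, mul0r, mulr0, addr0, add0r).
move=> h12 h02 h01 h22 h11 h00; rewrite h00 h11 h22 !(addr0, add0r) in h01 h02 h12.
by move=> i j; case: (ord3_cases i) => ->; case: (ord3_cases j) => ->.
Qed.

Lemma qpolar_combr a v s t x y :
  qpolar a v (s *: x + t *: y) = s * qpolar a v x + t * qpolar a v y.
Proof. rewrite /qpolar !qevalE !mxE; ring. Qed.

Lemma qevalBZ a b mu x : qeval (a - mu *: b) x = qeval a x - mu * qeval b x.
Proof. rewrite !qevalE !mxE; ring. Qed.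

Lemma qpolarBZ a b mu x y : qpolar (a - mu *: b) x y = qpolar a x y - mu * qpolar b x y.
Proof. rewrite /qpolar !qevalBZ; ring. Qed.

End QuadraticForm.

Lemma qeval_map (F L : fieldType) (f : {rmorphism F -> L}) (a : 'M[F]_3) v :
  qeval (map_mx f a) (map_mx f v) = f (qeval a v).
Proof. by rewrite !qevalE !mxE !rmorphD !rmorphM. Qed.

Lemma qpolar_map (F L : fieldType) (f : {rmorphism F -> L}) (a : 'M[F]_3) v w :
  qpolar (map_mx f a) (map_mx f v) (map_mx f w) = f (qpolar a v w).
Proof. by rewrite /qpolar -raddfD /= !qeval_map -!rmorphB. Qed.

Lemma map_rows3 (F L : fieldType) (f : {rmorphism F -> L}) (b0 b1 b2 : 'rV[F]_3) :
  map_mx f (rows3 b0 b1 b2) = rows3 (map_mx f b0) (map_mx f b1) (map_mx f b2).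
Proof. by apply/matrixP => i j; rewrite !mxE; case: (i == i0); case: (i == i1). Qed.

Section LinearAlgebra.
Variables (F : fieldType) (n : nat).
Implicit Types (v w : 'rV[F]_n).

Lemma nsubmx_sym v w : v != 0 -> w != 0 -> ~~ (v <= w)%MS -> ~~ (w <= v)%MS.
Proof.
move=> nv nw; apply: contra => wv.
by rewrite -(mxrank_leqif_sup wv).2 !rank_rV nv nw.
Qed.

Lemma mxrank_adds2_leq v w : (\rank (v + w)%MS <= 2)%N.
Proof.
apply: leq_trans (mxrank_adds_leqif v w).1 _.
by rewrite !rank_rV; case: (_ != 0); case: (_ != 0).
Qed.

Lemma mxrank_adds2 v w : v != 0 -> ~~ (w <= v)%MS -> \rank (v + w)%MS = 2%N.
Proof.
move=> nv nw; apply/eqP; rewrite eqn_leq mxrank_adds2_leq /=.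
have : (\rank v < \rank (v + w)%MS)%N.
  apply: rank_ltmx; rewrite ltmxE addsmxSl /=.
  by apply: contra nw; apply: submx_trans; exact: addsmxSr.
by rewrite rank_rV nv.
Qed.

Lemma adds2_sup m (U : 'M[F]_(m, n)) v w : (\rank U <= 2)%N ->
  v != 0 -> ~~ (w <= v)%MS -> (v <= U)%MS -> (w <= U)%MS -> (U <= v + w)%MS.
Proof.
move=> rU nv nw sv sw; have s : (v + w <= U)%MS by rewrite addsmx_sub sv.
have := mxrankS s; rewrite mxrank_adds2 // => gU.
by rewrite -(mxrank_leqif_sup s).2 mxrank_adds2 // eqn_leq gU rU.
Qed.

Lemma comb2_sub v w (x y : F) : ((x *: v + y *: w)%R <= v + w)%MS.
Proof. by apply: addmx_sub_adds; apply: scalemx_sub; rewrite submx_refl. Qed.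

Definition indep2 v w := forall x y : F, x *: v + y *: w = 0 -> x = 0 /\ y = 0.

Lemma indep2_nsub v w : v != 0 -> ~~ (w <= v)%MS -> indep2 v w.
Proof.
move=> nv nwv x y E; have y0 : y = 0.
  apply/eqP; apply: contraNT nwv => ny; apply/sub_rVP; exists (- (x / y)).
  apply: (scalerI ny); rewrite scalerA mulrN mulrCA divff // mulr1 scaleNr.
  by apply/eqP; rewrite -addr_eq0 addrC E.
by split=> //; move/eqP: E; rewrite y0 scale0r addr0 scaler_eq0 (negbTE nv) orbF => /eqP.
Qed.

Lemma indep2_inj v w (x y x' y' : F) : indep2 v w ->
  x *: v + y *: w = x' *: v + y' *: w -> x = x' /\ y = y'.
Proof.
move=> I /eqP; rewrite -subr_eq0 => /eqP E.
have [/eqP h1 /eqP h2] : x - x' = 0 /\ y - y' = 0.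
  by apply: I; rewrite -E !scalerBl; apply/rowP => j; rewrite !mxE; ring.
by split; apply/eqP; rewrite -subr_eq0.
Qed.

End LinearAlgebra.

Section Bases.
Variable F : fieldType.
Implicit Types (v w b : 'rV[F]_3).

Definition indep3 (b0 b1 b2 : 'rV[F]_3) := forall x0 x1 x2 : F,
  x0 *: b0 + x1 *: b1 + x2 *: b2 = 0 -> [/\ x0 = 0, x1 = 0 & x2 = 0].

Lemma indep3_nsub v w b : indep2 v w -> ~~ (b <= v + w)%MS -> indep3 v w b.
Proof.
move=> I nb x0 x1 x2 E; have z2 : x2 = 0.
  apply/eqP; apply: contraNT nb => nz.
  have -> : b = (- (x0 / x2)) *: v + (- (x1 / x2)) *: w.
    apply: (scalerI nz); rewrite scalerDr !scalerA !mulrN !(mulrC x2) !divfK //.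
    by apply/eqP; rewrite !scaleNr -opprD -addr_eq0 addrC E.
  exact: comb2_sub.
by move: E; rewrite z2 scale0r addr0 => /I [-> ->].
Qed.

Lemma indep3_inj (b0 b1 b2 : 'rV[F]_3) (x0 x1 x2 y0 y1 y2 : F) : indep3 b0 b1 b2 ->
  x0 *: b0 + x1 *: b1 + x2 *: b2 = y0 *: b0 + y1 *: b1 + y2 *: b2 ->
  [/\ x0 = y0, x1 = y1 & x2 = y2].
Proof.
move=> I /eqP; rewrite -subr_eq0 => /eqP E.
have [/eqP h0 /eqP h1 /eqP h2] : [/\ x0 - y0 = 0, x1 - y1 = 0 & x2 - y2 = 0].
  by apply: I; rewrite -E !scalerBl; apply/rowP => j; rewrite !mxE; ring.
by split; apply/eqP; rewrite -subr_eq0.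
Qed.

Lemma rows3_unit (b0 b1 b2 : 'rV[F]_3) : indep3 b0 b1 b2 -> rows3 b0 b1 b2 \in unitmx.
Proof.
move=> I; rewrite -row_free_unit -kermx_eq0; apply/eqP/row_matrixP => i.
rewrite row0; have /sub_kermxP := row_sub i (kermx (rows3 b0 b1 b2)).
rewrite mul_rows3 => /I [h0 h1 h2].
by apply/rowP => j; rewrite [RHS]mxE; case: (ord3_cases j) => ->.
Qed.

Lemma indep3_span (b0 b1 b2 z : 'rV[F]_3) : indep3 b0 b1 b2 ->
  exists x0 x1 x2, z = x0 *: b0 + x1 *: b1 + x2 *: b2.
Proof.
move=> /rows3_unit U; set X := z *m invmx (rows3 b0 b1 b2).
by exists (X 0 i0), (X 0 i1), (X 0 i2); rewrite -mul_rows3 /X mulmxKV.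
Qed.

Lemma exists_delta_nsub m (W : 'M[F]_(m, 3)) : (\rank W < 3)%N ->
  exists i, ~~ ((delta_mx 0 i : 'rV[F]_3) <= W)%MS.
Proof.
move=> rW; apply/existsP; apply: contraTT rW; rewrite negb_exists -leqNgt => /forallP nW.
have : (1%:M <= W)%MS by apply/row_subP => i; rewrite row1; exact/negbNE/nW.
by move/mxrankS; rewrite mxrank1.
Qed.

Lemma exists_nsub_adds2 v w : v != 0 -> ~~ (w <= v)%MS ->
  exists b, ~~ (b <= v + w)%MS.
Proof.
move=> nv nw; have [|i ni] := @exists_delta_nsub _ (v + w)%MS.
  by rewrite mxrank_adds2.
by exists (delta_mx 0 i).
Qed.

Lemma complete_basis v : v != 0 -> exists b1 b2, indep3 v b1 b2.
Proof.
move=> nv; have [|i ni] := @exists_delta_nsub _ v; first by rewrite rank_rV nv.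
have [b nb] := exists_nsub_adds2 nv ni.
by exists (delta_mx 0 i), b; apply: indep3_nsub nb; exact: indep2_nsub.
Qed.

End Bases.

Lemma abs_irreducible_nofactor (F L : fieldType) (f : {rmorphism F -> L})
    (a : 'M[F]_3) (u w : 'rV[L]_3) :
  abs_irreducible a -> ~ (forall z, qeval (map_mx f a) z = dot3 z u * dot3 z w).
Proof.
move=> abs fac; have [i [j /andP [le_ij]]] := abs L f u w; apply/negP; rewrite negbK.
pose c := \matrix_(k, l) (f (a k l) -
  (if k == l then u 0 k * w 0 k else u 0 k * w 0 l + u 0 l * w 0 k)).
have c0 x : qeval c x = 0.
  have := fac x; rewrite qevalE /dot3 !mxE => /eqP; rewrite -subr_eq0 => /eqP <-.
  have n01 : (i0 == i1) = false by [].
  have n02 : (i0 == i2) = false by [].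
  have n12 : (i1 == i2) = false by [].
  rewrite qevalE !mxE !eqxx n01 n02 n12; ring.
by rewrite -subr_eq0; have := qeval_eq0_coef c0 le_ij; rewrite mxE => ->.
Qed.

Lemma abs_irreducible_nofactor_basis (F L : fieldType) (f : {rmorphism F -> L})
    (a : 'M[F]_3) (M : 'M[L]_3) (u w : 'rV[L]_3) :
  abs_irreducible a -> M \in unitmx ->
  ~ (forall x, qeval (map_mx f a) (x *m M) = dot3 x u * dot3 x w).
Proof.
move=> abs uM fac; apply: (abs_irreducible_nofactor (f := f) (u := (invmx M *m u^T)^T)
  (w := (invmx M *m w^T)^T) abs) => z.
by have := fac (z *m invmx M); rewrite mulmxKV // => ->; rewrite -!dot3E !trmxK !mulmxA.
Qed.

Section AbsIrreducible.
Variables (F : fieldType) (a : 'M[F]_3).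
Hypothesis abs : abs_irreducible a.
Implicit Types (v w z : 'rV[F]_3).

(* Otherwise, in the basis [v, w, b], [qeval a] is the third coordinate times a
   linear form. *)
Lemma qpolar_zeros_neq0 v w : v != 0 -> ~~ (w <= v)%MS ->
  qeval a v = 0 -> qeval a w = 0 -> qpolar a v w != 0.
Proof.
move=> nv nw Qv Qw; apply/negP => /eqP B.
have [b nb] := exists_nsub_adds2 nv nw.
apply: (@abs_irreducible_nofactor_basis F F idfun a (rows3 v w b)
  (row3 0 0 1) (row3 (qpolar a v b) (qpolar a w b) (qeval a b)) abs).
  by apply: rows3_unit; apply: indep3_nsub nb; exact: indep2_nsub.
move=> x; rewrite map_mx_id // mul_rows3 qeval_comb3 Qv Qw B /dot3 !row3E; ring.
Qed.

Lemma zeros_noncollinear v1 v2 v3 : v1 != 0 ->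
  ~~ (v2 <= v1)%MS -> ~~ (v3 <= v1)%MS -> ~~ (v3 <= v2)%MS -> (v3 <= v1 + v2)%MS ->
  qeval a v1 = 0 -> qeval a v2 = 0 -> qeval a v3 = 0 -> False.
Proof.
move=> n1 s21 s31 s32 /sub_addsmxP [u E] Q1 Q2 Q3.
have /sub_rVP [x Ex] : (u.1 *m v1 <= v1)%MS by exact: submxMl.
have /sub_rVP [y Ey] : (u.2 *m v2 <= v2)%MS by exact: submxMl.
rewrite Ex Ey in E.
have nx : x != 0.
  by apply: contraNneq s32 => x0; rewrite E x0 scale0r add0r scalemx_sub.
have ny : y != 0.
  by apply: contraNneq s31 => y0; rewrite E y0 scale0r addr0 scalemx_sub.
have := qpolar_zeros_neq0 n1 s21 Q1 Q2.
move: Q3; rewrite E qeval_comb2 Q1 Q2 !mulr0 add0r addr0 => /eqP.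
by rewrite !mulf_eq0 (negbTE nx) (negbTE ny) /= => ->.
Qed.

End AbsIrreducible.

Lemma pencil_zeros_collinear (F : fieldType) (a : 'M[F]_3) (v1 v2 v3 z : 'rV[F]_3) :
  indep3 v1 v2 v3 -> qeval a v1 = 0 -> qeval a v2 = 0 -> qeval a v3 = 0 ->
  qpolar a v1 v2 = 0 -> (qpolar a v1 v3 != 0) || (qpolar a v2 v3 != 0) ->
  qeval a z = 0 -> ~~ (z <= v1 + v2)%MS ->
  (z <= v3 + (qpolar a v2 v3 *: v1 - qpolar a v1 v3 *: v2))%MS.
Proof.
move=> I Q1 Q2 Q3 B12 nB Qz nz; have [x0 [x1 [x2 Ez]]] := indep3_span z I.
have nx2 : x2 != 0.
  by apply: contraNneq nz => x20; rewrite Ez x20 scale0r addr0 comb2_sub.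
set B13 := qpolar a v1 v3 in nB *; set B23 := qpolar a v2 v3 in nB *.
have on_line : x0 * B13 + x1 * B23 = 0.
  move/eqP: Qz; rewrite Ez qeval_comb3_isotropic //.
  by rewrite mulf_eq0 (negbTE nx2) => /eqP.
have [c Ec] : exists c, x0 *: v1 + x1 *: v2 = c *: (B23 *: v1 - B13 *: v2).
  case: (eqVneq B13 0) nB on_line => [-> /= nB23 | nB13 _ on_line].
    rewrite mulr0 add0r => /eqP; rewrite mulf_eq0 (negbTE nB23) orbF => /eqP ->.
    by exists (x0 / B23); apply/rowP => j; rewrite !mxE; field.
  exists (- x1 / B13); apply/rowP => j; rewrite !mxE.
  have -> : x0 = - x1 * B23 / B13.
    by apply: (mulIf nB13); rewrite divfK // mulNr; apply/eqP; rewrite -addr_eq0 on_line.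
  by field.
by rewrite Ez Ec addrC comb2_sub.
Qed.

Section Pencil.
Variables (F : fieldType) (a1 a2 : 'M[F]_3) (v1 v2 v3 v4 v5 : 'rV[F]_3).
Hypotheses (abs1 : abs_irreducible a1) (abs2 : abs_irreducible a2).
Hypotheses (n1 : v1 != 0) (s21 : ~~ (v2 <= v1)%MS)
  (s31 : ~~ (v3 <= v1)%MS) (s32 : ~~ (v3 <= v2)%MS)
  (s41 : ~~ (v4 <= v1)%MS) (s42 : ~~ (v4 <= v2)%MS) (s43 : ~~ (v4 <= v3)%MS)
  (s51 : ~~ (v5 <= v1)%MS) (s52 : ~~ (v5 <= v2)%MS) (s53 : ~~ (v5 <= v3)%MS)
  (s54 : ~~ (v5 <= v4)%MS).
Hypotheses (P1 : qeval a1 v1 = 0) (P2 : qeval a1 v2 = 0) (P3 : qeval a1 v3 = 0)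
  (P4 : qeval a1 v4 = 0) (P5 : qeval a1 v5 = 0).
Hypotheses (Q1 : qeval a2 v1 = 0) (Q2 : qeval a2 v2 = 0) (Q3 : qeval a2 v3 = 0)
  (Q4 : qeval a2 v4 = 0) (Q5 : qeval a2 v5 = 0).

(* [mu] is chosen so that the polar form of [a := a1 - mu a2] vanishes at
   [(v1, v2)].  Then either [qeval a] is identically zero, so that [a1] and [a2]
   have the same zeros, or the zeros of [a] off the line [v1 v2] are collinear,
   which contradicts [v3], [v4], [v5] being non-collinear zeros of [a1]. *)
Let mu := qpolar a1 v1 v2 / qpolar a2 v1 v2.
Let a := a1 - mu *: a2.

Let mu_neq0 : mu != 0.
Proof. by rewrite mulf_neq0 ?invr_neq0 // qpolar_zeros_neq0. Qed.

Let Za z : qeval a1 z = 0 -> qeval a2 z = 0 -> qeval a z = 0.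
Proof. by move=> z1 z2; rewrite qevalBZ z1 z2 mulr0 subr0. Qed.

Let Za12 : qpolar a v1 v2 = 0.
Proof. by rewrite qpolarBZ /mu divfK ?subrr // qpolar_zeros_neq0. Qed.

Let off_line z : qeval a1 z = 0 -> ~~ (z <= v1)%MS -> ~~ (z <= v2)%MS ->
  ~~ (z <= v1 + v2)%MS.
Proof.
by move=> Pz sz1 sz2; apply/negP => /(zeros_noncollinear abs1 n1 s21 sz1 sz2); apply.
Qed.

Lemma eq_zero_sets_of_5 z : (qeval a1 z == 0) = (qeval a2 z == 0).
Proof.
have I3 := indep3_nsub (indep2_nsub n1 s21) (off_line P3 s31 s32).
have [nB | B0] := boolP ((qpolar a v1 v3 != 0) || (qpolar a v2 v3 != 0)).
  pose w := qpolar a v2 v3 *: v1 - qpolar a v1 v3 *: v2.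
  have on_w u : qeval a1 u = 0 -> qeval a2 u = 0 -> ~~ (u <= v1)%MS -> ~~ (u <= v2)%MS ->
      (u <= v3 + w)%MS.
    move=> Pu Qu su1 su2; apply: (pencil_zeros_collinear I3 (Za P1 Q1) (Za P2 Q2) (Za P3 Q3)
      Za12 nB (Za Pu Qu) (off_line Pu su1 su2)).
  have n3 : v3 != 0 by apply: contraNneq s31 => ->; exact: sub0mx.
  have s34 : (v3 + w <= v3 + v4)%MS.
    exact: adds2_sup (mxrank_adds2_leq _ _) n3 s43 (addsmxSl _ _) (on_w _ P4 Q4 s41 s42).
  exfalso; apply: (zeros_noncollinear abs1 n3 s43 s53 s54 _ P3 P4 P5).
  exact: submx_trans (on_w _ P5 Q5 s51 s52) s34.
have Qa0 : qeval a z = 0.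
  move: B0; rewrite negb_or !negbK => /andP [/eqP B13 /eqP B23].
  have [x0 [x1 [x2 ->]]] := indep3_span z I3.
  rewrite (qeval_comb3_isotropic _ _ _ (Za P1 Q1) (Za P2 Q2) (Za P3 Q3) Za12).
  by rewrite B13 B23 !mulr0 addr0 mulr0.
move: Qa0; rewrite qevalBZ => /eqP; rewrite subr_eq0 => /eqP ->.
by rewrite mulf_eq0 (negbTE mu_neq0).
Qed.

End Pencil.

(* Otherwise [qeval a] would be a binary quadratic form in the coordinates
   along [b1] and [b2], and such a form splits over the algebraic closure. *)
Lemma qpolar_nondegenerate (F : countFieldType) (a : 'M[F]_3) (v b1 b2 : 'rV[F]_3) :
  abs_irreducible a -> indep3 v b1 b2 -> qeval a v = 0 ->
  (qpolar a v b1 != 0) || (qpolar a v b2 != 0).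
Proof.
move=> abs I Qv; rewrite -negb_and; apply/negP => /andP [/eqP B1 /eqP B2].
have [K [f _]] := countable_algebraic_closure F.
have U : map_mx f (rows3 v b1 b2) \in unitmx by rewrite map_unitmx rows3_unit.
set A := f (qeval a b1); set C := f (qeval a b2); set B := f (qpolar a b1 b2).
have Qb x : qeval (map_mx f a) (x *m map_mx f (rows3 v b1 b2)) =
    A * x 0 i1 ^+ 2 + B * x 0 i1 * x 0 i2 + C * x 0 i2 ^+ 2.
  rewrite map_rows3 mul_rows3 qeval_comb3 !qeval_map !qpolar_map Qv B1 B2 !rmorph0.
  by rewrite -/A -/C -/B; ring.
have [A0 | nA] := eqVneq A 0.
  apply: (abs_irreducible_nofactor_basis (f := f) (u := row3 0 0 1) (w := row3 0 B C)
    abs U).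
  by move=> x; rewrite Qb A0 /dot3 !row3E; ring.
have [r Er] :=
  @solve_monicpoly K 2 (fun i => if i == 0%N then - (C / A) else - (B / A)) isT.
rewrite !big_ord_recl big_ord0 /= in Er.
apply: (abs_irreducible_nofactor_basis (f := f) (u := row3 0 1 (- r))
  (w := row3 0 A (B + A * r)) abs U) => x.
have EC : C = - (A * r ^+ 2) - B * r by rewrite Er; field.
by rewrite Qb EC /dot3 !row3E; ring.
Qed.

Section ProjectiveLine.
Variable F : fieldType.

(* [option F] enumerates the points [(x : y)] of the projective line:
   [Some k] is [(1 : k)] and [None] is [(0 : 1)]. *)
Definition pcoord1 (o : option F) : F := if o is Some _ then 1 else 0.
Definition pcoord2 (o : option F) : F := if o is Some k then k else 1.

Lemma pcoord_neq0 o : (pcoord1 o != 0) || (pcoord2 o != 0).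
Proof. by case: o => [k|] /=; rewrite oner_eq0 ?orbT. Qed.

Lemma pcoord_cross_inj o o' :
  pcoord1 o * pcoord2 o' = pcoord2 o * pcoord1 o' -> o = o'.
Proof.
case: o => [k|]; case: o' => [k'|] //=; rewrite ?(mul1r, mulr1, mul0r, mulr0).
- by move->.
- by move/eqP; rewrite oner_eq0.
- by move/eqP; rewrite eq_sym oner_eq0.
Qed.

Lemma pcoord_prop_inj o o' (c : F) :
  pcoord1 o = c * pcoord1 o' -> pcoord2 o = c * pcoord2 o' -> o = o'.
Proof. by move=> e1 e2; apply: pcoord_cross_inj; rewrite e1 e2; ring. Qed.

Lemma pcoord_kernel_inj (l1 l2 : F) o o' : (l1 != 0) || (l2 != 0) ->
  pcoord1 o * l1 + pcoord2 o * l2 = 0 -> pcoord1 o' * l1 + pcoord2 o' * l2 = 0 -> o = o'.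
Proof.
move=> nl e e'; apply: pcoord_cross_inj; apply/eqP; rewrite -subr_eq0.
set d := _ - _.
have dl1 : d * l1 = pcoord2 o' * (pcoord1 o * l1 + pcoord2 o * l2)
                    - pcoord2 o * (pcoord1 o' * l1 + pcoord2 o' * l2) by rewrite /d; ring.
have dl2 : d * l2 = pcoord1 o * (pcoord1 o' * l1 + pcoord2 o' * l2)
                    - pcoord1 o' * (pcoord1 o * l1 + pcoord2 o * l2) by rewrite /d; ring.
rewrite e e' !mulr0 subrr in dl1 dl2.
by case/orP: nl => nl; [move/eqP: dl1 | move/eqP: dl2]; rewrite mulf_eq0 (negbTE nl) orbF.
Qed.

End ProjectiveLine.

Section ProjectivePlane.
Variable F : finFieldType.
Implicit Types (v w : 'rV[F]_3) (a : 'M[F]_3) (l : Line F) (p : Point F).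

Lemma point_spec v : v != 0 -> (<< <<v>>%MS >>%MS == <<v>>%MS) && (\rank <<v>>%MS == 1%N).
Proof. by move=> nv; rewrite genmx_id eqxx mxrank_gen rank_rV nv. Qed.

Lemma const1_neq0 : (const_mx 1 : 'rV[F]_3) != 0.
Proof. by apply/eqP => /rowP /(_ i0) /eqP; rewrite !mxE oner_eq0. Qed.

Definition point0 : Point F := exist _ (<<const_mx 1>>%MS) (point_spec const1_neq0).

(* [vpoint 0] is the junk value [point0]. *)
Definition vpoint v : Point F := insubd point0 <<v>>%MS.

Lemma vpointE v : v != 0 -> val (vpoint v) = <<v>>%MS.
Proof. by move=> nv; rewrite /vpoint insubdK //; exact: point_spec. Qed.

Lemma vpoint_surj p : exists2 v, v != 0 & p = vpoint v.
Proof.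
have /andP [/eqP gp /eqP rp] := valP p.
have [v vp nv] : exists2 v : 'rV[F]_3, (v <= val p)%MS & v != 0.
  by apply/rowV0Pn; rewrite -mxrank_eq0 rp.
exists v => //; apply: val_inj; rewrite vpointE // -gp; apply/esym/eq_genmx/eqmxP.
by rewrite -(mxrank_leqif_eq vp).2 rp rank_rV nv.
Qed.

Lemma eq_vpoint v w : v != 0 -> w != 0 -> (vpoint v == vpoint w) = (v <= w)%MS.
Proof.
move=> nv nw; rewrite -val_eqE !vpointE //; apply/eqP/idP => [E|vw].
  by rewrite -(genmxE v) E genmxE.
by apply/eq_genmx/eqmxP; rewrite -(mxrank_leqif_eq vw).2 !rank_rV nv nw.
Qed.

Lemma mem_zero_set a v : v != 0 -> (vpoint v \in zero_set a) = (qeval a v == 0).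
Proof.
move=> nv; rewrite inE; apply/forallP/idP => [/(_ v)|/eqP Qv w].
  by rewrite vpointE // genmxE submx_refl.
by apply/implyP; rewrite vpointE // genmxE => /sub_rVP [k ->]; rewrite qevalZ Qv mulr0.
Qed.

Lemma mem_line_pts l v : v != 0 -> (vpoint v \in line_pts l) = (v <= val l)%MS.
Proof. by move=> nv; rewrite inE /incident vpointE // genmxE. Qed.

Lemma line_eq_adds l v w : v != 0 -> ~~ (w <= v)%MS ->
  (v <= val l)%MS -> (w <= val l)%MS -> (val l == v + w)%MS.
Proof.
move=> nv nw vl wl; have /andP [_ /eqP rl] := valP l.
by rewrite adds2_sup ?rl // addsmx_sub vl.
Qed.

Lemma card_line_line l l' : l != l' -> (#|line_pts l :&: line_pts l'| <= 1)%N.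
Proof.
move=> nl; rewrite leqNgt; apply/negP => /card_gt1P [p1 [p2 [h1 h2 d]]].
have [v1 n1 E1] := vpoint_surj p1; have [v2 n2 E2] := vpoint_surj p2.
move: h1 h2 d; rewrite E1 E2 !in_setI !mem_line_pts // eq_vpoint //.
move=> /andP [l1 l'1] /andP [l2 l'2] /(nsubmx_sym n1 n2) s21.
have /eqmxP El := line_eq_adds n1 s21 l1 l2.
have /eqmxP El' := line_eq_adds n1 s21 l'1 l'2.
move/eqP: nl; apply; apply: val_inj.
have /andP [/eqP gl _] := valP l; have /andP [/eqP gl' _] := valP l'.
by rewrite -gl -gl'; apply: eq_genmx; exact: eqmx_trans El (eqmx_sym El').
Qed.

Lemma card_line_conic l a : abs_irreducible a -> (#|line_pts l :&: zero_set a| <= 2)%N.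
Proof.
move=> abs; rewrite leqNgt; apply/negP.
case/card_gt2P => [p1 [p2 [p3 [[h1 h2 h3] [d12 d23 d31]]]]].
have [v1 n1 E1] := vpoint_surj p1; have [v2 n2 E2] := vpoint_surj p2.
have [v3 n3 E3] := vpoint_surj p3.
move: h1 h2 h3 d12 d23 d31; rewrite E1 E2 E3 !in_setI !mem_line_pts // !mem_zero_set //.
rewrite !eq_vpoint // => /andP [l1 /eqP q1] /andP [l2 /eqP q2] /andP [l3 /eqP q3].
move=> d12 d23 d31.
have s21 := nsubmx_sym n1 n2 d12.
apply: (zeros_noncollinear abs n1 s21 d31 (nsubmx_sym n2 n3 d23) _ q1 q2 q3).
by have /eqmxP El := line_eq_adds n1 s21 l1 l2; rewrite -El.
Qed.

Lemma card_conic_conic a1 a2 : abs_irreducible a1 -> abs_irreducible a2 ->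
  zero_set a1 != zero_set a2 -> (#|zero_set a1 :&: zero_set a2| <= 4)%N.
Proof.
move=> abs1 abs2 ne; rewrite leqNgt; apply/negP => /card_geqP [s [us ss sub]].
case: s us ss sub => [|p1 [|p2 [|p3 [|p4 [|p5 [|]]]]]] //= us _ sub.
have [v1 n1 E1] := vpoint_surj p1; have [v2 n2 E2] := vpoint_surj p2.
have [v3 n3 E3] := vpoint_surj p3; have [v4 n4 E4] := vpoint_surj p4.
have [v5 n5 E5] := vpoint_surj p5.
have m1 : p1 \in zero_set a1 :&: zero_set a2 by apply: sub; rewrite !inE eqxx ?orbT.
have m2 : p2 \in zero_set a1 :&: zero_set a2 by apply: sub; rewrite !inE eqxx ?orbT.
have m3 : p3 \in zero_set a1 :&: zero_set a2 by apply: sub; rewrite !inE eqxx ?orbT.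
have m4 : p4 \in zero_set a1 :&: zero_set a2 by apply: sub; rewrite !inE eqxx ?orbT.
have m5 : p5 \in zero_set a1 :&: zero_set a2 by apply: sub; rewrite !inE eqxx ?orbT.
move: m1 m2 m3 m4 m5; rewrite E1 E2 E3 E4 E5 !in_setI !mem_zero_set //.
move=> /andP [/eqP P1 /eqP Q1] /andP [/eqP P2 /eqP Q2] /andP [/eqP P3 /eqP Q3].
move=> /andP [/eqP P4 /eqP Q4] /andP [/eqP P5 /eqP Q5].
move: us; rewrite /= !inE !negb_or E1 E2 E3 E4 E5 !eq_vpoint // andbT.
move=> /and4P [/and4P [d12 d13 d14 d15] /and3P [d23 d24 d25] /andP [d34 d35] d45].
have E := eq_zero_sets_of_5 abs1 abs2 n1 (nsubmx_sym n1 n2 d12) (nsubmx_sym n1 n3 d13)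
  (nsubmx_sym n2 n3 d23) (nsubmx_sym n1 n4 d14) (nsubmx_sym n2 n4 d24)
  (nsubmx_sym n3 n4 d34) (nsubmx_sym n1 n5 d15) (nsubmx_sym n2 n5 d25)
  (nsubmx_sym n3 n5 d35) (nsubmx_sym n4 n5 d45) P1 P2 P3 P4 P5 Q1 Q2 Q3 Q4 Q5.
move/negP: ne; apply; apply/eqP/setP => p; have [v nv ->] := vpoint_surj p.
by rewrite !mem_zero_set // E.
Qed.

Lemma card_option_inj (S : {set Point F}) (g : option F -> Point F) :
  injective g -> (forall o, g o \in S) -> (#|F|.+1 <= #|S|)%N.
Proof.
move=> g_inj gS; rewrite -card_option -cardsT -(card_imset _ g_inj).
by apply/subset_leq_card/subsetP => _ /imsetP [o _ ->].
Qed.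

Lemma card_line_pts l : (#|F|.+1 <= #|line_pts l|)%N.
Proof.
have /andP [_ /eqP rl] := valP l.
have [v1 v1l n1] : exists2 v1 : 'rV[F]_3, (v1 <= val l)%MS & v1 != 0.
  by apply/rowV0Pn; rewrite -mxrank_eq0 rl.
have [v2 v2l nv2] : exists2 v2 : 'rV[F]_3, (v2 <= val l)%MS & ~~ (v2 <= v1)%MS.
  have /row_subPn [i ni] : ~~ (val l <= v1)%MS.
    by apply/negP => /mxrankS; rewrite rl rank_rV n1.
  by exists (row i (val l)); rewrite ?row_sub.
have I := indep2_nsub n1 nv2.
pose R o := pcoord1 o *: v1 + pcoord2 o *: v2.
have nR o : R o != 0.
  by apply/eqP => /I [e1 e2]; move: (pcoord_neq0 o); rewrite e1 e2 eqxx.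
apply: (@card_option_inj _ (fun o => vpoint (R o))) => [o o' /eqP|o].
  rewrite eq_vpoint // => /sub_rVP [c]; rewrite scalerDr !scalerA.
  by case/(indep2_inj I); exact: pcoord_prop_inj.
by rewrite mem_line_pts // (submx_trans (comb2_sub _ _ _ _)) // addsmx_sub v1l.
Qed.

End ProjectivePlane.

Section ConicThroughPoint.
Variables (F : finFieldType) (a : 'M[F]_3) (v b1 b2 : 'rV[F]_3).
Hypotheses (abs : abs_irreducible a) (I : indep3 v b1 b2) (Qv : qeval a v = 0).

Let nv : v != 0.
Proof.
apply/eqP => v0; have [one0 _ _] : [/\ 1 = 0 :> F, 0 = 0 :> F & 0 = 0 :> F].
  by apply: I; rewrite v0 !scale0r scaler0 !addr0.
by move/eqP: one0; rewrite oner_eq0.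
Qed.

Let R o := pcoord1 o *: b1 + pcoord2 o *: b2.
Let t o := qpolar a v (R o).

(* The line through [v] and [R o] meets the conic again at [X o], which is
   [v] itself exactly when the line is tangent, i.e. when [t o = 0]. *)
Let X o := t o *: R o - qeval a (R o) *: v.

Let X_zero o : qeval a (X o) = 0.
Proof. by rewrite /X -scaleNr addrC qeval_comb2 Qv /t; ring. Qed.

Let X_coords o :
  X o = - qeval a (R o) *: v + (t o * pcoord1 o) *: b1 + (t o * pcoord2 o) *: b2.
Proof. by apply/rowP => k; rewrite /X /R !mxE; ring. Qed.

Let X_off_v o : t o != 0 -> ~~ (X o <= v)%MS.
Proof.
move=> to; apply/negP => /sub_rVP [c E].
have : X o = c *: v + 0 *: b1 + 0 *: b2 by rewrite E !scale0r !addr0.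
rewrite X_coords => /(indep3_inj I) [_ /eqP e1 /eqP e2].
move: e1 e2 (pcoord_neq0 o); rewrite !mulf_eq0 (negbTE to) /=.
by move=> /eqP -> /eqP ->; rewrite eqxx.
Qed.

Let X_neq0 o : t o != 0 -> X o != 0.
Proof. by move/X_off_v; apply: contraNneq => ->; exact: sub0mx. Qed.

Definition second_point o := if t o != 0 then vpoint (X o) else vpoint v.

Lemma second_point_inj : injective second_point.
Proof.
move=> o o'; rewrite /second_point.
have [to|to] := boolP (t o != 0); have [to'|to'] := boolP (t o' != 0).
- move/eqP; rewrite eq_vpoint ?X_neq0 // => /sub_rVP [c].
  rewrite !X_coords !scalerDr !scalerA => /(indep3_inj I) [_ e1 e2].
  apply: (@pcoord_prop_inj _ _ _ (c * t o' / t o)); apply: (mulfI to).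
    by rewrite e1; field.
  by rewrite e2; field.
- by move/eqP; rewrite eq_vpoint ?X_neq0 // (negbTE (X_off_v to)).
- by move/eqP; rewrite eq_sym eq_vpoint ?X_neq0 // (negbTE (X_off_v to')).
move=> _; rewrite !negbK /t /R !qpolar_combr in to to'.
exact: pcoord_kernel_inj (qpolar_nondegenerate abs I Qv) (eqP to) (eqP to').
Qed.

Lemma card_zero_set_through : (#|F|.+1 <= #|zero_set a|)%N.
Proof.
apply: (card_option_inj second_point_inj) => o; rewrite /second_point.
by case: ifP => [to|_]; rewrite mem_zero_set ?X_neq0 ?X_zero ?Qv.
Qed.

End ConicThroughPoint.

Lemma card_zero_set (F : finFieldType) (a : 'M[F]_3) (p : Point F) :
  abs_irreducible a -> p \in zero_set a -> (#|F|.+1 <= #|zero_set a|)%N.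
Proof.
move=> abs; have [v nv ->] := vpoint_surj p; rewrite mem_zero_set // => /eqP Qv.
have [b1 [b2 I]] := complete_basis nv.
exact: card_zero_set_through abs I Qv.
Qed.

Lemma card_bigcup_leq (I T : finType) (P : pred I) (A : I -> {set T}) :
  (#|\bigcup_(i | P i) A i| <= \sum_(i | P i) #|A i|)%N.
Proof.
elim/big_rec2: _ => [|i U k _ IH]; first by rewrite cards0.
by apply: leq_trans (leq_card_setU _ _).1 _; exact: leq_add.
Qed.

Lemma F2_neq0 (x : 'F_2) : (x != 0) = (x == 1).
Proof. by case: x => [[|[|//]] ?]. Qed.

Definition col_wt (m n : nat) (H : 'M['F_2]_(m, n)) (j : 'I_n) : nat :=
  #|[set i : 'I_m | H i j == 1]|.

Section BitFlipping.
Variables (m n : nat) (H : 'M['F_2]_(m, n)).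

Lemma col_inter_le_max j k : j != k -> (col_inter H j k <= max_col_inter H)%N.
Proof.
move=> jk; rewrite /max_col_inter; apply: leq_trans (leq_bigmax j).
by apply: (@leq_bigmax_cond _ (fun k => k != j) (fun k => col_inter H j k)); rewrite eq_sym.
Qed.

Variables (c e : 'rV['F_2]_n).
Hypothesis c_in_code : in_code H c.

Let E := [set k | e 0 k != 0].
Let s := H *m (c + e)^T.
Let unsat j := [set i | (H i j == 1) && (s i 0 == 1)].
Let meet j k := [set i | (H i j == 1) && (H i k == 1)].

Lemma syndromeE i : s i 0 = \sum_(k in E) H i k.
Proof.
have Hc : H *m c^T = 0.
  by have /eqP/(congr1 trmx) := c_in_code; rewrite trmx_mul trmxK trmx0.
rewrite /s linearD /= mulmxDr Hc add0r mxE (bigID (mem E)) /= addrC big1 ?add0r.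
  by apply: eq_bigr => k; rewrite inE F2_neq0 mxE => /eqP ->; rewrite mulr1.
by move=> k; rewrite inE negbK mxE => /eqP ->; rewrite mulr0.
Qed.

Lemma unsat_sub_meet j : unsat j \subset \bigcup_(k in E) meet j k.
Proof.
apply/subsetP => i; rewrite inE syndromeE => /andP [Hij s1].
have [k /andP [kE Hik] | none] := pickP (fun k => (k \in E) && (H i k == 1)).
  by apply/bigcupP; exists k; rewrite // inE Hij.
move: s1; rewrite big1 ?(eq_sym 0) ?oner_eq0 // => k kE.
by apply/eqP/negPn; rewrite F2_neq0; move: (none k); rewrite kE => /negbT.
Qed.

Lemma col_sub_unsat j : j \in E ->
  [set i | H i j == 1] :\: \bigcup_(k in E :\ j) meet j k \subset unsat j.
Proof.
move=> jE; apply/subsetP => i; rewrite !inE => /andP [nU Hij]; rewrite Hij /=.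
rewrite syndromeE (bigD1 j) //= big1 ?addr0 // => k /andP [kE kj].
apply/eqP/negPn; rewrite F2_neq0; apply: contra nU => Hik.
by apply/bigcupP; exists k; [rewrite in_setD1 kj | rewrite inE Hij].
Qed.

Lemma card_meet_union j (A : {set 'I_n}) : j \notin A ->
  (#|\bigcup_(k in A) meet j k| <= max_col_inter H * #|A|)%N.
Proof.
move=> jA; apply: leq_trans (card_bigcup_leq _ _) _.
rewrite mulnC -sum_nat_const; apply: leq_sum => k kA.
by apply: col_inter_le_max; apply: contraNneq jA => ->.
Qed.

Variables (v lam : nat).
Hypotheses (col_wt_ge : forall j, (v <= col_wt H j)%N)
  (max_col_inter_le : (max_col_inter H <= lam)%N) (wt_e_le : (wt e <= v %/ (2 * lam))%N).

Let wt_e_bound : (2 * lam * #|E| <= v)%N.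
Proof.
case: (posnP lam) => [-> // | lam_gt0].
by rewrite mulnC -leq_divRL ?muln_gt0.
Qed.

Lemma card_unsat_err j : j \in E -> (v < 2 * #|unsat j|)%N.
Proof.
move=> jE; have lam_gt0 : (0 < lam)%N.
  case: (posnP lam) wt_e_le => // ->; rewrite divn0 leqn0 => /eqP /cards0_eq E0.
  by move: jE; rewrite /E E0 inE.
have cover : (col_wt H j <= #|\bigcup_(k in E :\ j) meet j k| + #|unsat j|)%N.
  rewrite /col_wt -(cardsID (\bigcup_(k in E :\ j) meet j k)).
  by apply: leq_add; apply: subset_leq_card; [exact: subsetIr | exact: col_sub_unsat].
have U : (#|\bigcup_(k in E :\ j) meet j k| <= lam * #|E :\ j|)%N.
  apply: leq_trans (card_meet_union _) _; first by rewrite setD11.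
  by rewrite leq_mul2r max_col_inter_le orbT.
have := cardsD1 j E; rewrite jE => cE.
have := wt_e_bound; have := col_wt_ge j; nia.
Qed.

Lemma card_unsat_noerr j : j \notin E -> (2 * #|unsat j| <= v)%N.
Proof.
move=> jE; have uE : (#|unsat j| <= lam * #|E|)%N.
  apply: leq_trans (subset_leq_card (unsat_sub_meet j)) _.
  apply: leq_trans (card_meet_union jE) _.
  by rewrite leq_mul2r max_col_inter_le orbT.
have := wt_e_bound; lia.
Qed.

Lemma bitflip_correct : bitflip H v (c + e) = c.
Proof.
apply/rowP => j; rewrite !mxE -/s -/(unsat j).
have [jE | jE] := boolP (j \in E).
  have two0 : (1 + 1 : 'F_2) = 0 by apply: val_inj.
  move: jE (card_unsat_err jE); rewrite inE F2_neq0 => /eqP -> ->.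
  by rewrite -addrA two0 addr0.
move: jE (card_unsat_noerr jE); rewrite inE negbK leqNgt => /eqP -> /negbTE ->.
by rewrite !addr0.
Qed.

End BitFlipping.

Lemma line_pts_inj (F : finFieldType) : injective (@line_pts F).
Proof.
move=> l l' E; apply/eqP/negPn/negP => /card_line_line; rewrite E setIid.
by have := card_line_pts l'; have : (1 < #|F|)%N := card_finNzRing_gt1 F; lia.
Qed.

Lemma card_enum_val_preim (T : finType) (A : {set T}) :
  #|[set i : 'I_#|T| | enum_val i \in A]| = #|A|.
Proof.
rewrite -(card_imset _ enum_val_inj).
suff -> : enum_val @: [set i : 'I_#|T| | enum_val i \in A] = A by [].
apply/setP => x; apply/imsetP/idP => [[i] | xA]; first by rewrite inE => iA ->.
by exists (enum_rank x); rewrite ?inE enum_rankK.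
Qed.

Section ParityCheckMatrix.
Variables (F : finFieldType) (t : nat) (Gam : 'I_t -> {set {set Point F}}).
Hypotheses (bundle : forall i, projective_bundle (Gam i))
  (disjoint_bundles : forall i j, i != j -> [disjoint Gam i & Gam j]).

Lemma bundle_conic i C : C \in Gam i -> exists2 a, abs_irreducible a & C = zero_set a.
Proof. by have [conic _ _] := bundle i => /conic [a []]; exists a. Qed.

Lemma mem_Hcols S : S \in Hcols Gam ->
  (exists l, S = line_pts l) \/ (exists i, S \in Gam i).
Proof.
rewrite mem_cat => /orP [/mapP [l _ ->] | /flattenP [_ /mapP [i _ ->]]].
  by left; exists l.
by rewrite mem_enum; right; exists i.
Qed.

Lemma card_Hcol S : S \in Hcols Gam -> (#|F|.+1 <= #|S|)%N.
Proof.
case/mem_Hcols => [[l ->] | [i Si]]; first exact: card_line_pts.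
have [a abs E] := bundle_conic Si; have [_ card_bundle meet1] := bundle i.
have [D DG SD] : exists2 D, D \in Gam i & S != D.
  have : (1 < #|Gam i|)%N.
    by rewrite card_bundle; have : (1 < #|F|)%N := card_finNzRing_gt1 F; lia.
  case/card_gt1P => [D1 [D2 [D1G D2G D12]]].
  by have [->|] := eqVneq S D1; [exists D2 | exists D1].
have /card_gt0P [p] : (0 < #|S :&: D|)%N by rewrite meet1.
by rewrite E in_setI => /andP [pS _]; exact: card_zero_set abs pS.
Qed.

Lemma card_Hcol_meet S S' : S \in Hcols Gam -> S' \in Hcols Gam -> S != S' ->
  (#|S :&: S'| <= 4)%N.
Proof.
case/mem_Hcols => [[l ->] | [i Si]]; case/mem_Hcols => [[l' ->] | [i' Si']] ne.
- have nl : l != l' by apply: contraNneq ne => ->.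
  exact: leq_trans (card_line_line nl) _.
- have [a abs ->] := bundle_conic Si'; exact: leq_trans (card_line_conic l abs) _.
- have [a abs ->] := bundle_conic Si; rewrite setIC.
  exact: leq_trans (card_line_conic l' abs) _.
- have [a abs Ea] := bundle_conic Si; have [a' abs' Ea'] := bundle_conic Si'.
  by rewrite Ea Ea'; apply: card_conic_conic; rewrite -?Ea -?Ea'.
Qed.

Lemma uniq_Hcols : uniq (Hcols Gam).
Proof.
have conic_not_line C i l : C \in Gam i -> C != line_pts l.
  move/bundle_conic => [a abs ->]; apply/eqP => E.
  have := card_line_conic l abs; rewrite E setIid.
  by have := card_line_pts l; have : (1 < #|F|)%N := card_finNzRing_gt1 F; lia.
rewrite cat_uniq (map_inj_uniq (@line_pts_inj F)) enum_uniq /=; apply/andP; split.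
  apply/hasPn => C /flattenP [_ /mapP [i _ ->]]; rewrite mem_enum => Ci.
  by apply/mapP => [[l _ /eqP]]; apply/negP; exact: conic_not_line Ci.
elim: (enum 'I_t) (enum_uniq 'I_t) => //= i r IH /andP [ir ur].
rewrite cat_uniq enum_uniq IH // andbT; apply/hasPn => C /flattenP [_ /mapP [j jr ->]].
have ji : j != i by apply: contraNneq ir => <-.
by rewrite !mem_enum => Cj; rewrite (disjointFr (disjoint_bundles ji) Cj).
Qed.

Let Hcol j := nth set0 (Hcols Gam) j.

Lemma col_wt_Hmx j : col_wt (Hmx Gam) j = #|Hcol j|.
Proof.
by rewrite -card_enum_val_preim; apply: eq_card => i; rewrite !inE mxE; case: (_ \in _).
Qed.

Lemma col_inter_Hmx j k : col_inter (Hmx Gam) j k = #|Hcol j :&: Hcol k|.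
Proof.
by rewrite -card_enum_val_preim; apply: eq_card => i; rewrite !inE !mxE;
  case: (_ \in Hcol j); case: (_ \in Hcol k).
Qed.

Lemma max_col_inter_Hmx : (max_col_inter (Hmx Gam) <= 4)%N.
Proof.
apply/bigmax_leqP => j _; apply/bigmax_leqP => k kj; rewrite col_inter_Hmx.
by apply: card_Hcol_meet; rewrite ?mem_nth // /Hcol nth_uniq ?uniq_Hcols // eq_sym.
Qed.

Lemma col_wt_Hmx_ge j : (#|F| + 1 <= col_wt (Hmx Gam) j)%N.
Proof. by rewrite col_wt_Hmx addn1 card_Hcol ?mem_nth. Qed.

End ParityCheckMatrix.

Theorem proposition5p3 (F : finFieldType) (t : nat)
  (Gam : 'I_t -> {set {set Point F}}) :
  (1 < t)%N ->
  (forall i, projective_bundle (Gam i)) ->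
  (forall i j, i != j -> [disjoint Gam i & Gam j]) ->
  (max_col_inter (Hmx Gam) <= 4)%N /\
  (forall (c e : 'rV['F_2]_(size (Hcols Gam))),
     in_code (Hmx Gam) c ->
     (wt e <= (#|F| + 1) %/ 8)%N ->
     bitflip (Hmx Gam) (#|F| + 1) (c + e) = c).
Proof.
move=> _ bundle disj; have max4 := max_col_inter_Hmx bundle disj.
split=> // c e c_code wt_e.
by apply: (bitflip_correct c_code (col_wt_Hmx_ge bundle) max4).
Qed.
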